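(* Let $p>1$ and $0\le a<p-1$. For every integer $n\ge 2$, $$\bigl(n^p-(n-1)^p-n^a\bigr)\,T_{n-1}(p-a)\;\ge\; n^a\, S_{n-1}(p-a),$$ where $T_m(q)=\sum_{k=m+1}^{\infty}k^{-q}$ and $S_m(q)=\sum_{k=1}^{m}k^{-q}$.
   Context: For $q>1$ and an integer $m\ge 1$: $T_m(q)=\sum_{k=m+1}^\infty k^{-q}$ and $S_m(q)=\sum_{k=1}^m k^{-q}$. *)

From Stdlib Require Import Reals.
From Coquelicot Require Import Coquelicot.
Open Scope R_scope.

Definition powm (k : nat) (q : R) : R := Rpower (INR k) (- q).

(* T_m(q) = sum_{k = m+1}^oo k^(-q)   (Coquelicot's Series; the series
   converges for q > 1, where it is used). *)
Definition T (m : nat) (q : R) : R := Series (fun j : nat => powm (j + m + 1) q).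

Definition S (m : nat) (q : R) : R := sum_n_m (fun k : nat => powm k q) 1 m.

From Pilot Require Import Defs.
From Stdlib Require Import Reals Lra Lia Psatz.
From Coquelicot Require Import Coquelicot.
Open Scope R_scope.

(* Write n = m + 1 and q = p - a.  Cutting the indices k > n of T_n into blocks
   k = n r + s (r >= 1, s = 1..n) and scaling by n^q, the block r contributes
   the terms (r + s/n)^(-q); likewise the indices k > m of T_m, cut into blocks
   k = m r + s (s = 1..m), give the terms (r + s/m)^(-q) of m^q T_m.
   Termwise (r + s/n)^(-q) >= (r + s/m)^(-q), and the surplus terms s = n are
   (r + 1)^(-q), which add up to zeta(q) - 1.  As n^q T_m = 1 + n^q T_n, this
   gives n^q T_m >= m^q T_m + zeta(q) = m^q T_m + S_m + T_m, and the factor n^a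
   follows from p = a + q and m^a <= n^a. *)

(* [S] is the partial sum of Defs, so the successor is written [Datatypes.S]. *)

Lemma Rpower_1_base (y : R) : Rpower 1 y = 1.
Proof. unfold Rpower; now rewrite ln_1, Rmult_0_r, exp_0. Qed.

Lemma Rpower_pos (x y : R) : 0 < Rpower x y.
Proof. apply exp_pos. Qed.

Lemma Rpower_ratio_le (q a b c d : R) :
  0 <= q -> 0 < a -> 0 < b -> 0 < c -> 0 < d -> c * b <= a * d ->
  Rpower c q * Rpower d (- q) <= Rpower a q * Rpower b (- q).
Proof.
  intros Hq Ha Hb Hc Hd Hcb.
  unfold Rpower; rewrite <- !exp_plus.
  assert (Hln : ln c + ln b <= ln a + ln d).
  { rewrite <- !ln_mult by lra; apply ln_le; nra. }
  destruct (Rle_lt_or_eq_dec (q * ln c + - q * ln d) (q * ln a + - q * ln b))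
    as [Hlt | ->]; [nra | now left; apply exp_increasing | lra].
Qed.

Lemma Rpower_opp_antitone (q x y : R) :
  0 <= q -> 0 < x -> x <= y -> Rpower y (- q) <= Rpower x (- q).
Proof.
  intros Hq Hx Hxy.
  pose proof (Rpower_ratio_le q 1 x 1 y Hq Rlt_0_1 Hx Rlt_0_1 ltac:(lra) ltac:(lra))
    as H.
  now rewrite !Rpower_1_base, !Rmult_1_l in H.
Qed.

Lemma powm_ratio_le (q : R) (a b c d : nat) :
  0 <= q -> (0 < a)%nat -> (0 < b)%nat -> (0 < c)%nat -> (0 < d)%nat ->
  (c * b <= a * d)%nat ->
  Rpower (INR c) q * powm d q <= Rpower (INR a) q * powm b q.
Proof.
  intros Hq Ha Hb Hc Hd Hcb.
  apply Rpower_ratio_le; try (apply lt_0_INR; assumption); [assumption|].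
  rewrite <- !mult_INR; now apply le_INR.
Qed.

(* The mean value theorem for x^(1-q) on [x, x+1]. *)
Lemma Rpower_telescoping_bound (q x : R) : 1 < q -> 1 <= x ->
  (q - 1) * Rpower (x + 1) (- q) <= Rpower x (1 - q) - Rpower (x + 1) (1 - q).
Proof.
  intros Hq Hx.
  destruct (MVT_cor2 (fun y => Rpower y (1 - q)) (fun y => (1 - q) * Rpower y (1 - q - 1))
              x (x + 1)) as [c [Hmvt Hc]]; [lra | intros c Hc; apply derivable_pt_lim_power; lra|].
  replace (1 - q - 1) with (- q) in Hmvt by ring.
  assert (Rpower (x + 1) (- q) <= Rpower c (- q)) by (apply Rpower_opp_antitone; lra).
  nra.
Qed.

Lemma zeta_partial_sum_bound (q : R) (N : nat) : 1 < q ->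
  (q - 1) * sum_n (fun j => powm (j + 1) q) N <= q - Rpower (INR N + 1) (1 - q).
Proof.
  intros Hq; induction N as [|N IH].
  - rewrite sum_O; unfold powm; simpl; rewrite Rplus_0_l, !Rpower_1_base; lra.
  - rewrite sum_Sn; change plus with Rplus; unfold powm at 2.
    rewrite plus_INR, S_INR; simpl (INR 1).
    pose proof (Rpower_telescoping_bound q (INR N + 1) Hq) as Htel.
    pose proof (pos_INR N); specialize (Htel ltac:(lra)); nra.
Qed.

Lemma ex_series_powm_shift (q : R) (c : nat) : 1 < q -> (1 <= c)%nat ->
  ex_series (fun j => powm (j + c) q).
Proof.
  intros Hq Hc.
  assert (Hzeta : ex_series (fun j => powm (j + 1) q)).
  { destruct (ex_finite_lim_seq_incr (sum_n (fun j => powm (j + 1) q)) (q / (q - 1)))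
      as [l Hl]; [| |now exists l].
    - intros N; rewrite sum_Sn; change plus with Rplus.
      assert (0 < powm (Datatypes.S N + 1) q) by (unfold powm; apply Rpower_pos); lra.
    - intros N; pose proof (zeta_partial_sum_bound q N Hq).
      assert (0 < Rpower (INR N + 1) (1 - q)) by apply Rpower_pos.
      apply Rmult_le_reg_l with (q - 1); [lra|]; field_simplify; lra. }
  apply (@ex_series_le R_AbsRing R_CompleteNormedModule _ (fun j => powm (j + 1) q));
    [intros j | exact Hzeta].
  change norm with Rabs; simpl.
  unfold powm; rewrite Rabs_pos_eq by (left; apply Rpower_pos).
  apply Rpower_opp_antitone; [lra | apply lt_0_INR; lia | apply le_INR; lia].
Qed.

Lemma ex_series_T (q : R) (m : nat) : 1 < q -> ex_series (fun j => powm (j + m + 1) q).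
Proof.
  intros Hq; apply (ex_series_ext (fun j => powm (j + (m + 1)) q)).
  - intros j; now rewrite Nat.add_assoc.
  - apply ex_series_powm_shift; [assumption | lia].
Qed.

Lemma T_nonneg (q : R) (m : nat) : 1 < q -> 0 <= T m q.
Proof.
  intros Hq; unfold T.
  rewrite <- (Rmult_0_l (Series (fun j => powm (j + m + 1) q))), <- Series_scal_l.
  apply Series_le; [|now apply ex_series_T].
  intros j; split; [lra|].
  left; rewrite Rmult_0_l; unfold powm; apply Rpower_pos.
Qed.

Lemma T_succ (q : R) (m : nat) :
  1 < q -> T m q = powm (Datatypes.S m) q + T (Datatypes.S m) q.
Proof.
  intros Hq; unfold T; rewrite Series_incr_1 by now apply ex_series_T.
  f_equal; [f_equal; lia | apply Series_ext; intros j; f_equal; lia].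
Qed.

Lemma S_add_T (q : R) (m : nat) : 1 < q -> S m q + T m q = T 0 q.
Proof.
  intros Hq; induction m as [|m IH].
  - unfold S; rewrite sum_n_m_zero by lia; apply Rplus_0_l.
  - rewrite <- IH, (T_succ q m Hq); unfold S.
    rewrite sum_n_Sm by lia; change plus with Rplus; ring.
Qed.

Lemma sum_n_m_shift (f : nat -> R) (c n m : nat) :
  sum_n_m (fun i => f (i + c)%nat) n m = sum_n_m f (n + c) (m + c).
Proof.
  induction c as [|c IH] in f |- *.
  - rewrite !Nat.add_0_r; apply sum_n_m_ext; intros; now rewrite Nat.add_0_r.
  - rewrite !Nat.add_succ_r, <- sum_n_m_S, <- (IH (fun i => f (Datatypes.S i))).
    apply sum_n_m_ext; intros; now rewrite Nat.add_succ_r.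
Qed.

Lemma sum_n_m_block (f : nat -> R) (a k : nat) :
  sum_n_m f (Datatypes.S a) (a + k) = sum_n_m (fun i => f (i + a)%nat) 1 k.
Proof. now rewrite sum_n_m_shift, Nat.add_comm. Qed.

Section BlockSums.

Variable q : R.
Hypothesis Hq : 1 < q.

(* c^q times the first r blocks of length c of the series T_c. *)
Definition block_sum (c r : nat) : R :=
  Rpower (INR c) q * sum_n_m (fun j => powm (j + c) q) 1 (c * r).

Lemma block_sum_S (c r : nat) :
  block_sum c (Datatypes.S r) =
  block_sum c r
  + Rpower (INR c) q * sum_n_m (fun j => powm (j + c) q) (Datatypes.S (c * r)) (c * r + c).
Proof.
  unfold block_sum; rewrite Nat.mul_succ_r.
  rewrite (sum_n_m_Chasles _ 1 (c * r) (c * r + c)) by lia.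
  change plus with Rplus; ring.
Qed.

Lemma block_sum_cvg (c : nat) : (1 <= c)%nat ->
  is_lim_seq (block_sum c) (Rpower (INR c) q * T c q).
Proof.
  intros Hc; set (f j := powm (j + c) q).
  assert (Hf : ex_series f) by (apply ex_series_powm_shift; assumption).
  assert (Htail : Series f - f 0%nat = T c q).
  { unfold T; rewrite (Series_incr_1 f Hf).
    rewrite (Series_ext _ (fun j => powm (j + c + 1) q)); [ring|].
    intros j; unfold f; f_equal; lia. }
  apply (is_lim_seq_scal_l _ (Rpower (INR c) q) (Finite (T c q))).
  rewrite <- Htail.
  apply (is_lim_seq_ext (fun r => sum_n f (c * r) - f 0%nat)).
  { intros r; pose proof (@sum_n_m_sum_n R_AbelianGroup f 0 (c * r) ltac:(lia)) as E.
    rewrite sum_O in E; symmetry; exact E. }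
  apply is_lim_seq_minus'; [|apply is_lim_seq_const].
  apply (is_lim_seq_subseq (sum_n f) _ (fun r => c * r)%nat).
  - apply eventually_subseq; intros; lia.
  - now apply Series_correct.
Qed.

Lemma block_sum_succ (m r : nat) : (1 <= m)%nat ->
  block_sum m r + block_sum 1 r <= block_sum (Datatypes.S m) r.
Proof.
  intros Hm; induction r as [|r IH].
  { unfold block_sum; rewrite !Nat.mul_0_r, !sum_n_m_zero by lia.
    change (zero (G := R_AbelianMonoid)) with 0; lra. }
  rewrite !block_sum_S.
  assert (Hlast :
    Rpower (INR 1) q * sum_n_m (fun j => powm (j + 1) q) (Datatypes.S (1 * r)) (1 * r + 1)
    <= Rpower (INR (Datatypes.S m)) q
       * powm (Datatypes.S (Datatypes.S m * r + m) + Datatypes.S m) q).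
  { rewrite Nat.mul_1_l, Nat.add_1_r, sum_n_n.
    apply powm_ratio_le; [lra | lia .. | nia]. }
  assert (Hblock :
    Rpower (INR m) q * sum_n_m (fun j => powm (j + m) q) (Datatypes.S (m * r)) (m * r + m)
    <= Rpower (INR (Datatypes.S m)) q
       * sum_n_m (fun j => powm (j + Datatypes.S m) q) (Datatypes.S (Datatypes.S m * r))
           (Datatypes.S m * r + m)).
  { rewrite !sum_n_m_block.
    rewrite <- !(sum_n_m_mult_l (K := R_Ring)).
    apply sum_n_m_le; intros i; apply powm_ratio_le; [lra | lia .. | nia]. }
  rewrite (Nat.add_succ_r (Datatypes.S m * r) m), (sum_n_Sm _ (Datatypes.S (Datatypes.S m * r)))
    by lia.
  change plus with Rplus; lra.
Qed.

Lemma Rpower_mul_T_succ (m : nat) : (1 <= m)%nat ->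
  Rpower (INR m) q * T m q + T 1 q <= Rpower (INR (Datatypes.S m)) q * T (Datatypes.S m) q.
Proof.
  intros Hm.
  pose proof (is_lim_seq_plus' _ _ _ _ (block_sum_cvg m Hm) (block_sum_cvg 1 (le_n 1))) as Hl.
  pose proof (is_lim_seq_le _ _ _ _ (fun r => block_sum_succ m r Hm) Hl
                (block_sum_cvg (Datatypes.S m) ltac:(lia))) as Hle.
  change (INR 1) with 1 in Hle; rewrite Rpower_1_base, Rmult_1_l in Hle; exact Hle.
Qed.

Lemma T_scaled_bound (m : nat) : (1 <= m)%nat ->
  (Rpower (INR (Datatypes.S m)) q - Rpower (INR m) q - 1) * T m q >= S m q.
Proof.
  intros Hm.
  assert (Hunit : Rpower (INR (Datatypes.S m)) q * powm (Datatypes.S m) q = 1).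
  { unfold powm; rewrite <- Rpower_plus, Rplus_opp_r.
    apply Rpower_O, lt_0_INR; lia. }
  pose proof (Rpower_mul_T_succ m Hm).
  pose proof (T_succ q 0 Hq); pose proof (T_succ q m Hq); pose proof (S_add_T q m Hq).
  simpl in *; unfold powm in *; rewrite Rpower_1_base in *; nra.
Qed.

End BlockSums.

Theorem lemma3p2 (p a : R) (n : nat) :
  1 < p -> 0 <= a -> a < p - 1 -> (2 <= n)%nat ->
  (Rpower (INR n) p - Rpower (INR n - 1) p - Rpower (INR n) a) * T (n - 1) (p - a)
  >= Rpower (INR n) a * S (n - 1) (p - a).
Proof.
  intros Hp Ha Hap Hn.
  destruct n as [|m]; [lia|].
  replace (Datatypes.S m - 1)%nat with m by lia.
  set (q := p - a).
  assert (Hq : 1 < q) by (unfold q; lra).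
  pose proof (T_scaled_bound q Hq m ltac:(lia)) as Hcore.
  pose proof (T_nonneg q m Hq) as HT.
  rewrite S_INR in *; replace (INR m + 1 - 1) with (INR m) by ring.
  replace p with (a + q) by (unfold q; ring); rewrite !Rpower_plus.
  assert (Hm : 0 < INR m) by (apply lt_0_INR; lia).
  assert (Hma : Rpower (INR m) a <= Rpower (INR m + 1) a) by (apply Rle_Rpower_l; lra).
  pose proof (Rpower_pos (INR m + 1) a); pose proof (Rpower_pos (INR m) q).
  assert (Rpower (INR m) a * Rpower (INR m) q * T m q
          <= Rpower (INR m + 1) a * Rpower (INR m) q * T m q)
    by (apply Rmult_le_compat_r, Rmult_le_compat_r; lra).
  nra.
Qed.
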